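(* Let $X_1,X_2$, $A,B,C,D$, $X$, $\mathcal{A}$, $\mathcal{D}$ be as in the context with $L=0$, and assume $\overline{\mathsf{R}(A)}=X_1$ and $\overline{\mathsf{R}(D)}=X_2$. Then the operators $CA^{-1}:\mathsf{R}(A)\to X_2$, $Ax\mapsto Cx$, and $BD^{-1}:\mathsf{R}(D)\to X_1$, $Dy\mapsto By$, are well defined and extend uniquely to bounded operators $G=\overline{CA^{-1}}\in\mathscr{L}(X_1,X_2)$ and $H=\overline{BD^{-1}}\in\mathscr{L}(X_2,X_1)$. If one of the operators $I-HG$ and $I-GH$ is boundedly invertible, then $$\|\mathcal{D}x\|_X\lesssim\|\mathcal{A}x\|_X\quad\text{for all }x\in\mathsf{D}(\mathcal{D})=\mathsf{D}(\mathcal{A}).$$ In particular, if in addition $A$ and $D$ are sectorial, this estimate holds if for some $\varepsilon>0$ either $\sup\{\|B(t+D)^{-1}C(t+A)^{-1}\|:t\in(0,\varepsilon)\}<1$ or $\sup\{\|C(t+A)^{-1}B(t+D)^{-1}\|:t\in(0,\varepsilon)\}<1$.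
   Context: All Banach spaces are complex. A linear operator $T$ on a Banach space $Y$ is sectorial if there is $\omega\in(0,\pi)$ with $\sigma(T)\subseteq\{z\in\mathbb{C}:|\arg z|\le\omega\}\cup\{0\}$, $\overline{\mathsf{D}(T)}=\overline{\mathsf{R}(T)}=Y$ and $\sup_{|\arg\lambda|>\omega}\|\lambda(\lambda-T)^{-1}\|<\infty$. Setting: $X_1,X_2$ Banach spaces; $A$ on $X_1$ and $D$ on $X_2$ closed densely defined linear operators; $B:\mathsf{D}(B)\subseteq X_2\to X_1$, $C:\mathsf{D}(C)\subseteq X_1\to X_2$ linear with $\mathsf{D}(D)\subseteq\mathsf{D}(B)$, $\mathsf{D}(A)\subseteq\mathsf{D}(C)$ and constants $c_A,c_D\ge0$ with $\|Cx\|\le c_A\|Ax\|$ ($x\in\mathsf{D}(A)$), $\|By\|\le c_D\|Dy\|$ ($y\in\mathsf{D}(D)$) (this is the case $L=0$). $X=X_1\times X_2$, $\mathcal{A}=\begin{bmatrix}A&B\\C&D\end{bmatrix}$, $\mathcal{D}=\begin{bmatrix}A&0\\0&D\end{bmatrix}$, both with domain $\mathsf{D}(A)\times\mathsf{D}(D)$. *)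

From HB Require Import structures.
From mathcomp Require Import all_boot all_order all_algebra.
From mathcomp Require Import all_classical all_reals all_analysis.
From mathcomp Require Import complex.
Import Order.TTheory GRing.Theory Num.Theory numFieldNormedType.Exports.

Set Implicit Arguments.
Unset Strict Implicit.
Unset Printing Implicit Defensive.

Local Open Scope ring_scope.
Local Open Scope classical_set_scope.

(* A (possibly unbounded) linear operator  T : D(T) ⊆ V -> W  is represented
   by its domain  dom : set V  together with a total function  f : V -> W
   whose values outside  dom  are irrelevant. *)

Section OperatorDefs.
Context {K : numFieldType}.

Definition subspace {V : lmodType K} (dom : set V) : Prop :=
  dom 0 /\ forall (a : K) (x y : V), dom x -> dom y -> dom (a *: x + y).

Definition linear_on {V W : lmodType K} (dom : set V) (f : V -> W) : Prop :=
  forall (a : K) (x y : V), dom x -> dom y -> f (a *: x + y) = a *: f x + f y.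

Definition lin_op {V W : lmodType K} (dom : set V) (f : V -> W) : Prop :=
  subspace dom /\ linear_on dom f.

Definition closed_op {V W : normedModType K} (dom : set V) (f : V -> W) : Prop :=
  closed [set p : V * W | dom p.1 /\ f p.1 = p.2].

Definition densely_defined {V : normedModType K} (dom : set V) : Prop :=
  closure dom = setT.

Definition dense_range {V W : normedModType K} (dom : set V) (f : V -> W) : Prop :=
  closure (f @` dom) = setT.

Definition bounded_lin {V W : normedModType K} (g : V -> W) : Prop :=
  linear_on setT g /\ exists M : K, forall x, `|g x| <= M * `|x|.

Definition is_bounded_inverse {V W : normedModType K}
  (dom : set V) (f : V -> W) (g : W -> V) : Prop :=
  [/\ bounded_lin g,
      (forall y, dom (g y)),
      (forall y, f (g y) = y) &
      (forall x, dom x -> g (f x) = x)].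

Definition boundedly_invertible {V : normedModType K} (f : V -> V) : Prop :=
  exists g : V -> V, is_bounded_inverse setT f g.

End OperatorDefs.

Section Sectorial.
Context {R : realType}.

(* |arg z| for the principal argument arg z ∈ (-π, π], z ≠ 0:
   cos (arg z) = Re (z / |z|) and |arg z| ∈ [0, π]. *)
Definition abs_arg (z : R[i]) : R := acos (complex.Re (z / `|z|)).

(* sectorial operator (dom, T) on Y:  there is ω ∈ (0, π) such that
   σ(T) ⊆ {|arg z| ≤ ω} ∪ {0} (i.e. every λ ≠ 0 with |arg λ| > ω lies in the
   resolvent set: λ - T : D(T) -> Y has a bounded inverse),
   D(T) and R(T) are dense, and
   sup_{|arg λ| > ω} ‖λ (λ - T)^{-1}‖ < ∞. *)
Definition sectorial {Y : normedModType R[i]} (dom : set Y) (T : Y -> Y) : Prop :=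
  exists omega : R,
  [/\ 0 < omega < pi,
      (forall l : R[i], l != 0 -> omega < abs_arg l ->
         exists g, is_bounded_inverse dom (fun x => l *: x - T x) g),
      densely_defined dom,
      dense_range dom T &
      exists M : R, forall l : R[i], l != 0 -> omega < abs_arg l ->
         forall g, is_bounded_inverse dom (fun x => l *: x - T x) g ->
         forall y, `|l *: g y| <= (M%:C)%C * `|y| ].

End Sectorial.

Set Warnings "-notation-overridden,-ambiguous-paths,-notation-incompatible-prefix".
From Pilot Require Import Defs.
From HB Require Import structures.
From mathcomp Require Import all_boot all_order all_algebra.
From mathcomp Require Import all_classical all_reals all_analysis.
From mathcomp Require Import complex.
From mathcomp Require Import ring lra.
Import Order.TTheory GRing.Theory Num.Theory numFieldNormedType.Exports.
Local Open Scope ring_scope.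
Local Open Scope classical_set_scope.
Local Open Scope complex_scope.

(* Write u = A x1 and v = D x2.  Density of the ranges and completeness give
   bounded operators G, H with G (A x) = C x and H (D y) = B y, so the block
   operator maps (x1, x2) to (p, q) = (u + H v, G u + v).  If I - HG has a
   bounded inverse Phi then u = Phi (p - H q), which bounds u by (p, q); then
   v = q - C x1 with |C x1| <= cA |u| bounds v.  The case of I - GH is the same
   argument with the two components exchanged.  In the sectorial case, with
   RA = (t + A)^-1 and RD = (t + D)^-1, the identity
     A x1 = p - B RD q + (B RD C RA) (t x1 + A x1) - t B RD x2
   gives (1 - q0) |A x1| <= |p| + cD (1 + M) |q| + O(t), where q0 < 1 bounds
   B RD C RA and M is the sectoriality constant of D; let t -> 0. *)

Lemma gt0_complex_real {R : realType} (e : R[i]) :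
  0 < e -> exists2 r : R, 0 < r & e = r%:C.
Proof.
move=> e0; have e_real := RRe_real (gtr0_real e0).
by exists (complex.Re e); rewrite ?e_real // -ltcR e_real.
Qed.

Lemma normc_real {R : realType} (x : R) : `|x%:C| = `|x|%:C.
Proof. by rewrite normc_def /= expr0n /= addr0 sqrtr_sqr. Qed.

Section RealNorm.
Context {R : realType} {V : normedModType R[i]}.
Implicit Types (u v w : V).

(* The norm of a normed R[i]-module is complex-valued; estimates are carried
   out on its real part, where the order is total. *)
Definition rnorm u : R := complex.Re `|u|.

Lemma rnormE u : `|u| = (rnorm u)%:C.
Proof. by rewrite RRe_real // ger0_real. Qed.

Lemma rnorm_ge0 u : 0 <= rnorm u.
Proof. by rewrite -ler0c -rnormE. Qed.

Lemma rnorm0 : rnorm (0 : V) = 0.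
Proof. by rewrite /rnorm normr0. Qed.

Lemma rnorm_eq0 u : (rnorm u == 0) = (u == 0).
Proof. by rewrite -[u == 0]normr_eq0 rnormE (inj_eq (@complexI _)). Qed.

Lemma ler_rnormD u v : rnorm (u + v) <= rnorm u + rnorm v.
Proof. by rewrite -lecR rmorphD /= -!rnormE ler_normD. Qed.

Lemma rnormN u : rnorm (- u) = rnorm u.
Proof. by rewrite /rnorm normrN. Qed.

Lemma rnormB u v : rnorm (u - v) = rnorm (v - u).
Proof. by rewrite -rnormN opprB. Qed.

Lemma ler_rnormB u v : rnorm (u - v) <= rnorm u + rnorm v.
Proof. by rewrite -(rnormN v) ler_rnormD. Qed.

Lemma ler_rnorm_dist u v w : rnorm (u - w) <= rnorm (u - v) + rnorm (v - w).
Proof. by have := ler_rnormD (u - v) (v - w); rewrite addrA subrK. Qed.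

Lemma ler_dist_rnorm u v : `|rnorm u - rnorm v| <= rnorm (u - v).
Proof.
have := ler_rnormD (u - v) v; have := ler_rnormD (v - u) u.
by rewrite !subrK rnormB ler_distl; lra.
Qed.

Lemma rnormZ_real (t : R) u : rnorm (t%:C *: u) = `|t| * rnorm u.
Proof. by apply: complexI; rewrite rmorphM /= -!rnormE normrZ normc_real. Qed.

End RealNorm.

Lemma lec_rnorm {R : realType} {V W : normedModType R[i]} (u : V) (v : W) (c : R) :
  (`|u| <= c%:C * `|v|) = (rnorm u <= c * rnorm v).
Proof. by rewrite !rnormE -rmorphM lecR. Qed.

Lemma rnorm_pair {R : realType} {V W : normedModType R[i]} (u : V) (v : W) :
  rnorm ((u, v) : (V * W)%type) = Num.max (rnorm u) (rnorm v).
Proof.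
apply: complexI; rewrite -rnormE prod_normE /= !rnormE.
by rewrite /Num.max /Order.max ltcR; case: ifP.
Qed.

Section RealNormConvergence.
Context {R : realType} {V : normedModType R[i]} {T : Type}.
Context {F : set_system T} {FF : Filter F}.
Implicit Types (f : T -> V) (l : V).

Lemma cvg_rnormP f l : f @ F --> l <-> rnorm (f t - l) @[t --> F] --> (0 : R).
Proof.
split=> /cvgrPdist_lt fl; apply/cvgrPdist_lt.
  move=> e e0; have e0' : 0 < e%:C by rewrite ltcR.
  apply: filterS (fl _ e0') => t.
  by rewrite distrC rnormE ltcR sub0r normrN ger0_norm ?rnorm_ge0.
move=> _ /gt0_complex_real[e e0 ->]; apply: filterS (fl _ e0) => t.
by rewrite sub0r normrN ger0_norm ?rnorm_ge0 // distrC rnormE ltcR.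
Qed.

Lemma cvg_rnorm_le {f l} {b : T -> R} :
  (forall t, rnorm (f t - l) <= b t) -> b @ F --> 0 -> f @ F --> l.
Proof.
move=> fb b0; apply/cvg_rnormP/(squeeze_cvgr _ (cvg_cst 0) b0).
by near=> t; rewrite rnorm_ge0 fb.
Unshelve. all: by end_near. Qed.

Lemma cvg_rnorm {f l} : f @ F --> l -> rnorm (f t) @[t --> F] --> rnorm l.
Proof.
move=> /cvg_rnormP fl; apply/subr_cvg0/norm_cvg0P.
apply: (squeeze_cvgr _ (cvg_cst 0) fl).
by near=> t; rewrite normr_ge0 ler_dist_rnorm.
Unshelve. all: by end_near. Qed.

End RealNormConvergence.

Lemma cvgn_rnorm_lt {R : realType} {V : normedModType R[i]} {s : nat -> V} {l : V} :
  s @ \oo --> l -> forall e : R, 0 < e -> exists N, forall n, (N <= n)%N -> rnorm (s n - l) < e.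
Proof.
move=> /cvg_rnormP/cvgrPdist_lt sl e e0; have [N _ sN] := sl e e0.
by exists N => n /sN; rewrite /= sub0r normrN ger0_norm ?rnorm_ge0.
Qed.

(* [Defs.subspace] is qualified because MathComp-Analysis's [subspace] (the
   subspace topology) shadows it. *)
Section LinearOn.
Context {K : numFieldType} {V W : lmodType K}.
Context {S : set V} {f : V -> W}.
Hypotheses (S_subspace : Defs.subspace S) (f_linear : linear_on S f).

Lemma subspace0 : S 0.
Proof. by move: S_subspace => -[]. Qed.

Lemma subspaceZD a {x y} : S x -> S y -> S (a *: x + y).
Proof. by move: S_subspace => -[_]; apply. Qed.

Lemma subspaceZ a {x} : S x -> S (a *: x).
Proof. by move=> Sx; rewrite -[a *: x]addr0; apply: subspaceZD => //; exact: subspace0. Qed.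

Lemma subspaceB {x y} : S x -> S y -> S (x - y).
Proof. by move=> Sx Sy; have := subspaceZD (-1) Sy Sx; rewrite scaleN1r addrC. Qed.

Lemma subspaceN {x} : S x -> S (- x).
Proof. by move=> Sx; rewrite -sub0r; apply: subspaceB => //; exact: subspace0. Qed.

Lemma linear_onB {x y} : S x -> S y -> f (x - y) = f x - f y.
Proof.
by move=> Sx Sy; have := f_linear (-1) y x Sy Sx; rewrite !scaleN1r addrC => ->; rewrite addrC.
Qed.

Lemma linear_on0 : f 0 = 0.
Proof. by have := linear_onB subspace0 subspace0; rewrite !subrr. Qed.

Lemma linear_onN {x} : S x -> f (- x) = - f x.
Proof. by move=> Sx; rewrite -sub0r linear_onB ?linear_on0 ?sub0r//; exact: subspace0. Qed.

Lemma linear_onD {x y} : S x -> S y -> f (x + y) = f x + f y.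
Proof. by move=> Sx Sy; rewrite -[x]scale1r f_linear // !scale1r. Qed.

Lemma linear_onZ a {x} : S x -> f (a *: x) = a *: f x.
Proof. by move=> Sx; rewrite -[a *: x]addr0 f_linear ?linear_on0 ?addr0//; exact: subspace0. Qed.

Lemma subspace_image : Defs.subspace (f @` S).
Proof.
split; first by exists 0; [exact: subspace0 | exact: linear_on0].
move=> a _ _ [x Sx <-] [y Sy <-]; exists (a *: x + y); first exact: subspaceZD.
exact: f_linear.
Qed.

End LinearOn.

Lemma subspaceT {K : numFieldType} {V : lmodType K} : Defs.subspace (@setT V).
Proof. by []. Qed.

Section BoundedLinear.
Context {R : realType} {X Y : normedModType R[i]}.

Lemma bounded_lin_rnorm {g : X -> Y} : bounded_lin g ->
  exists M : R, 0 <= M /\ forall x, rnorm (g x) <= M * rnorm x.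
Proof.
move=> [_ [[a b] gM]]; exists `|a|; split => // x.
have := gM x; rewrite !rnormE lecE /= => /andP[_ gxM].
by have := ler_norm a; have := rnorm_ge0 x; nra.
Qed.

Lemma bounded_lin_of_rnorm {g : X -> Y} {M : R} : linear_on setT g ->
  (forall x, rnorm (g x) <= M * rnorm x) -> bounded_lin g.
Proof. by move=> g_lin gM; split => //; exists M%:C => x; rewrite lec_rnorm. Qed.

Lemma lipschitz_on_linear {S : set X} {g : X -> Y} {c : R} :
  Defs.subspace S -> linear_on S g -> (forall x, S x -> rnorm (g x) <= c * rnorm x) ->
  forall x y, S x -> S y -> rnorm (g x - g y) <= c * rnorm (x - y).
Proof.
move=> S_sub g_lin gc x y Sx Sy.
by rewrite -(linear_onB g_lin) // gc //; exact: subspaceB.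
Qed.

Lemma lipschitz_bounded_lin {g : X -> Y} : bounded_lin g ->
  exists M : R, 0 <= M /\ forall x y, rnorm (g x - g y) <= M * rnorm (x - y).
Proof.
move=> g_bd; have [M [M0 gM]] := bounded_lin_rnorm g_bd; case: g_bd => g_lin _.
by exists M; split => // x y; apply: (lipschitz_on_linear subspaceT g_lin (fun x _ => gM x)).
Qed.

End BoundedLinear.

Section LipschitzOn.
Context {R : realType} {X Y : normedModType R[i]}.
Context {S : set X} {f : X -> Y} {c : R}.
Hypothesis f_lipschitz :
  forall x y, S x -> S y -> rnorm (f x - f y) <= c * rnorm (x - y).

Lemma lipschitz_on_cvg_sub0 {T} {F : set_system T} {FF : Filter F} {s s' : T -> X} :
  (forall t, S (s t)) -> (forall t, S (s' t)) ->
  s t - s' t @[t --> F] --> 0 -> f (s t) - f (s' t) @[t --> F] --> 0.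
Proof.
move=> Ss Ss' /cvg_rnormP/(cvgMl_tmp (a := c)); rewrite mulr0 => ss'.
by apply: (cvg_rnorm_le _ ss') => t; rewrite !subr0 f_lipschitz.
Qed.

Lemma lipschitz_on_cvg {T} {F : set_system T} {FF : Filter F} {s : T -> X} {x} :
  S x -> (forall t, S (s t)) -> s @ F --> x -> f (s t) @[t --> F] --> f x.
Proof.
move=> Sx Ss /subr_cvg0 sx; apply/subr_cvg0.
exact: (lipschitz_on_cvg_sub0 Ss (fun=> Sx)).
Qed.

End LipschitzOn.

Lemma lipschitz_on_is_cvg {R : realType} {X : normedModType R[i]}
    {Y : completeNormedModType R[i]} {S : set X} {f : X -> Y} {c : R} {s : nat -> X} :
  0 <= c -> (forall x y, S x -> S y -> rnorm (f x - f y) <= c * rnorm (x - y)) ->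
  (forall n, S (s n)) -> cvgn s -> cvgn (f \o s).
Proof.
move=> c0 f_lip Ss /cvgn_rnorm_lt s_cvg.
apply: (cauchy_cvg (f \o s @ \oo)); apply: cauchy_exP => _ /gt0_complex_real[e e0 ->].
have c1 : 0 < 2 * c + 1 by rewrite ltr_wpDl ?mulr_ge0.
have d0 : 0 < e / (2 * c + 1) by rewrite divr_gt0.
have [N sN] := s_cvg _ d0; exists (f (s N)), N => // n Nn /=.
rewrite -ball_normE /ball_ /= rnormE ltcR; apply: (le_lt_trans (f_lip _ _ (Ss N) (Ss n))).
have := ler_rnorm_dist (s N) (limn s) (s n); rewrite (rnormB (limn s)).
have := sN n Nn; have := sN N (leqnn N); rewrite -{3}(divfK (lt0r_neq0 c1) e).
move: d0; set d := e / _ => d0 sNd snd sNn.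
have : c * rnorm (s N - s n) <= c * (2 * d) by rewrite ler_wpM2l //; lra.
nra.
Qed.

Section Density.
Context {R : realType} {X Y : normedModType R[i]}.

Lemma closure_seq (S : set X) x :
  closure S x -> exists s : nat -> X, (forall n, S (s n)) /\ s @ \oo --> x.
Proof.
move=> Sx.
have approx n : exists y, S y /\ rnorm (x - y) < harmonic n.
  have e0 : 0 < (harmonic n : R)%:C by rewrite ltcR harmonic_gt0.
  have [y [Sy xy]] := Sx _ (nbhsx_ballx x _ e0).
  by exists y; move: xy; rewrite -ball_normE /ball_ /= rnormE ltcR.
have [s Ss] := choice approx; exists s; split => [n|]; first exact: (Ss n).1.
by apply: (cvg_rnorm_le _ cvg_harmonic) => n; rewrite rnormB; exact/ltW/(Ss n).2.
Qed.

Lemma bounded_lin_cvg {T} {F : set_system T} {FF : Filter F} {g : X -> Y} {s : T -> X} {x} :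
  bounded_lin g -> s @ F --> x -> g (s t) @[t --> F] --> g x.
Proof.
move=> /lipschitz_bounded_lin [M [_ gM]].
exact: (lipschitz_on_cvg (S := setT) (fun x y _ _ => gM x y)).
Qed.

Lemma bounded_lin_eq_on_dense {S : set X} {G1 G2 : X -> Y} :
  closure S = setT -> bounded_lin G1 -> bounded_lin G2 ->
  (forall x, S x -> G1 x = G2 x) -> G1 = G2.
Proof.
move=> S_dense G1_bd G2_bd G12; apply/funext => x.
have [s [Ss sx]] : exists s, (forall n, S (s n)) /\ s @ \oo --> x.
  by apply: closure_seq; rewrite S_dense.
have G2sx : G1 (s n) @[n --> \oo] --> G2 x.
  by rewrite (eq_fun (fun n => G12 _ (Ss n))); exact: bounded_lin_cvg.
exact: cvg_unique _ (bounded_lin_cvg G1_bd sx) G2sx.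
Qed.

End Density.

Section BoundedExtension.
Context {R : realType} {X : normedModType R[i]} {Y : completeNormedModType R[i]}.
Context {S : set X} {f : X -> Y} {c : R}.
Hypotheses (S_subspace : Defs.subspace S) (S_dense : closure S = setT).
Hypotheses (f_linear : linear_on S f) (c_ge0 : 0 <= c).
Hypothesis f_bounded : forall x, S x -> rnorm (f x) <= c * rnorm x.

Let f_lipschitz := lipschitz_on_linear S_subspace f_linear f_bounded.

Lemma exists_bounded_extension :
  exists G : X -> Y, bounded_lin G /\ forall x, S x -> G x = f x.
Proof.
have approx (x : X) : exists s : nat -> X, (forall n, S (s n)) /\ s @ \oo --> x.
  by apply: closure_seq; rewrite S_dense.
have [u uP] := choice approx.
pose G x := lim (f \o u x @ \oo).
have fuG x : f \o u x @ \oo --> G x.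
  exact: (lipschitz_on_is_cvg c_ge0 f_lipschitz (uP x).1 (cvgP _ (uP x).2)).
have G_cvg x s : (forall n, S (s n)) -> s @ \oo --> x -> f \o s @ \oo --> G x.
  move=> Ss sx; apply: (cvg_sub0 _ (fuG x)).
  apply: (lipschitz_on_cvg_sub0 f_lipschitz Ss (uP x).1).
  by rewrite -(subrr x); apply: cvgB => //; exact: (uP x).2.
exists G; split => [|x Sx]; last first.
  exact/cvg_lim/(lipschitz_on_cvg f_lipschitz Sx (uP x).1 (uP x).2).
apply: (bounded_lin_of_rnorm (M := c)) => [a x y _ _ | x].
  pose s n := a *: u x n + u y n.
  have Ss n : S (s n) by apply: subspaceZD; [|exact: (uP x).1|exact: (uP y).1].
  have sxy : s @ \oo --> a *: x + y by apply: cvgD; [apply: cvgZl_tmp|]; exact: (uP _).2.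
  have fsxy : f \o s @ \oo --> a *: G x + G y.
    have -> : f \o s = (fun n => a *: f (u x n) + f (u y n)).
      by apply/funext => n; apply: f_linear; [exact: (uP x).1 | exact: (uP y).1].
    by apply: cvgD; [apply: cvgZl_tmp|]; exact: fuG.
  exact: cvg_unique _ (G_cvg _ _ Ss sxy) fsxy.
apply: (ler_cvg_to (cvg_rnorm (fuG x)) (cvgMl_tmp (a := c) (cvg_rnorm (uP x).2))).
by near=> n; exact: f_bounded ((uP x).1 n).
Unshelve. all: by end_near. Qed.

Lemma unique_bounded_extension :
  exists G : X -> Y, [/\ bounded_lin G, (forall x, S x -> G x = f x) &
    forall G', bounded_lin G' -> (forall x, S x -> G' x = f x) -> G' = G].
Proof.
have [G [G_bd GS]] := exists_bounded_extension; exists G; split => // G' G'_bd G'S.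
by apply: (bounded_lin_eq_on_dense S_dense) => // x Sx; rewrite G'S ?GS.
Qed.

End BoundedExtension.

Lemma relatively_bounded_wd {R : realType} {X1 X2 : normedModType R[i]}
    {dA : set X1} {A : X1 -> X1} {dC : set X1} {C : X1 -> X2} {cA : R} :
  lin_op dA A -> lin_op dC C -> dA `<=` dC ->
  (forall x, dA x -> rnorm (C x) <= cA * rnorm (A x)) ->
  forall x x', dA x -> dA x' -> A x = A x' -> C x = C x'.
Proof.
move=> [dA_sub A_linear] [_ C_linear] sAC C_bd x x' dx dx' Axx'.
have := C_bd _ (subspaceB dA_sub dx dx').
rewrite (linear_onB A_linear dx dx') Axx' subrr rnorm0 mulr0.
rewrite (linear_onB C_linear (sAC _ dx) (sAC _ dx')) => Cxx'.
by apply/eqP; rewrite -subr_eq0 -rnorm_eq0 eq_le Cxx' rnorm_ge0.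
Qed.

Lemma relatively_bounded_extension {R : realType} {X1 : normedModType R[i]}
    {X2 : completeNormedModType R[i]}
    {dA : set X1} {A : X1 -> X1} {dC : set X1} {C : X1 -> X2} {cA : R} :
  lin_op dA A -> lin_op dC C -> dA `<=` dC -> 0 <= cA ->
  (forall x, dA x -> rnorm (C x) <= cA * rnorm (A x)) -> dense_range dA A ->
  exists G : X1 -> X2, [/\ bounded_lin G, (forall x, dA x -> G (A x) = C x) &
    forall G', bounded_lin G' -> (forall x, dA x -> G' (A x) = C x) -> G' = G].
Proof.
move=> A_lin C_lin sAC cA0 C_bd A_dense.
case: (A_lin) (C_lin) => [dA_sub A_linear] [_ C_linear].
pose f y := C (get [set x | dA x /\ A x = y]).
have fA x : dA x -> f (A x) = C x.
  move=> dx; have [dg Ag] := @getPex _ [set z | dA z /\ A z = A x] (ex_intro _ x (conj dx erefl)).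
  exact: relatively_bounded_wd A_lin C_lin sAC C_bd _ _ dg dx Ag.
have f_linear : linear_on (A @` dA) f.
  move=> a _ _ [x dx <-] [x' dx' <-].
  rewrite -A_linear // !fA //; [exact: C_linear (sAC _ dx) (sAC _ dx') | exact: subspaceZD].
have f_bounded y : (A @` dA) y -> rnorm (f y) <= cA * rnorm y.
  by case=> x dx <-; rewrite fA //; exact: C_bd.
have [G [G_bd GA G_uniq]] :=
  unique_bounded_extension (subspace_image dA_sub A_linear) A_dense f_linear cA0 f_bounded.
exists G; split => // [x dx | G' G'_bd G'A]; first by rewrite GA ?fA //; exists x.
by apply: G_uniq => // _ [x dx <-]; rewrite G'A // fA.
Qed.

Definition block_estimate {R : realType} {X1 X2 : normedModType R[i]}
    (dA : set X1) (A : X1 -> X1) (dD : set X2) (D : X2 -> X2)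
    (B : X2 -> X1) (C : X1 -> X2) : Prop :=
  exists c : R, forall (x1 : X1) (x2 : X2), dA x1 -> dD x2 ->
    `|((A x1, D x2) : (X1 * X2)%type)|
      <= c%:C * `|((A x1 + B x2, C x1 + D x2) : (X1 * X2)%type)|.

Definition first_component_bound {R : realType} {X1 X2 : normedModType R[i]}
    (dA : set X1) (A : X1 -> X1) (dD : set X2) (D : X2 -> X2)
    (B : X2 -> X1) (C : X1 -> X2) (K : R) : Prop :=
  forall x1 x2, dA x1 -> dD x2 ->
    rnorm (A x1) <= K * Num.max (rnorm (A x1 + B x2)) (rnorm (C x1 + D x2)).

Section BlockEstimate.
Context {R : realType} {X1 X2 : normedModType R[i]}.
Context {dA : set X1} {A : X1 -> X1} {dD : set X2} {D : X2 -> X2}.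
Context {B : X2 -> X1} {C : X1 -> X2}.

Lemma block_estimate_swap :
  block_estimate dA A dD D B C -> block_estimate dD D dA A C B.
Proof.
case=> c Hc; exists c => x2 x1 d2 d1; have := Hc x1 x2 d1 d2.
by rewrite !lec_rnorm !rnorm_pair maxC [Num.max (rnorm (_ + _)) _]maxC addrC [B x2 + _]addrC.
Qed.

Lemma block_estimate_of_first_component {K cA : R} : 0 <= K -> 0 <= cA ->
  (forall x1, dA x1 -> rnorm (C x1) <= cA * rnorm (A x1)) ->
  first_component_bound dA A dD D B C K -> block_estimate dA A dD D B C.
Proof.
move=> K0 cA0 C_bd A_bd; exists (K + 1 + cA * K) => x1 x2 d1 d2.
rewrite lec_rnorm !rnorm_pair; set M := Num.max (rnorm (A x1 + B x2)) _.
have pM : rnorm (A x1 + B x2) <= M by rewrite /M le_max lexx.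
have qM : rnorm (C x1 + D x2) <= M by rewrite /M le_max lexx orbT.
have Ax1 : rnorm (A x1) <= K * M := A_bd _ _ d1 d2.
have Cx1 : cA * rnorm (A x1) <= cA * K * M by rewrite -mulrA ler_wpM2l.
have Dx2 : rnorm (D x2) <= rnorm (C x1 + D x2) + rnorm (C x1).
  by have := ler_rnormB (C x1 + D x2) (C x1); rewrite addrAC subrr add0r.
have := C_bd _ d1; have M0 : 0 <= M by rewrite (le_trans (rnorm_ge0 _) pM).
have KM : 0 <= K * M by rewrite mulr_ge0.
have cAKM : 0 <= cA * K * M by rewrite !mulr_ge0.
clearbody M; have -> : (K + 1 + cA * K) * M = K * M + M + cA * K * M by ring.
by rewrite ge_max => ?; apply/andP; split; lra.
Qed.

End BlockEstimate.

Lemma schur_complement_bound {R : realType} {X1 X2 : normedModType R[i]}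
    {G : X1 -> X2} {H : X2 -> X1} :
  bounded_lin H -> boundedly_invertible (fun x => x - H (G x)) ->
  exists K : R, 0 <= K /\
    forall u v, rnorm u <= K * Num.max (rnorm (u + H v)) (rnorm (G u + v)).
Proof.
move=> H_bd [Phi [Phi_bd _ _ PhiK]].
have [MH [MH0 HM]] := bounded_lin_rnorm H_bd; case: H_bd => H_lin _.
have [MP [MP0 PM]] := bounded_lin_rnorm Phi_bd.
exists (MP * (1 + MH)); split => [|u v]; first by rewrite mulr_ge0 // addr_ge0.
have uE : u = Phi ((u + H v) - H (G u + v)).
  by rewrite (linear_onD H_lin) // opprD addrACA subrr addr0 PhiK.
rewrite {1}uE; apply: (le_trans (PM _)); rewrite -mulrA ler_wpM2l //.
set M := Num.max _ _.
have pM : rnorm (u + H v) <= M by rewrite /M le_max lexx.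
have qM : MH * rnorm (G u + v) <= MH * M by rewrite ler_wpM2l // /M le_max lexx orbT.
have := ler_rnormB (u + H v) (H (G u + v)); have := HM (G u + v).
by clearbody M; nra.
Qed.

Lemma block_estimate_of_invertible {R : realType} {X1 X2 : normedModType R[i]}
    {dA : set X1} {A : X1 -> X1} {dD : set X2} {D : X2 -> X2}
    {B : X2 -> X1} {C : X1 -> X2} {G : X1 -> X2} {H : X2 -> X1} {cA : R} :
  0 <= cA -> (forall x, dA x -> rnorm (C x) <= cA * rnorm (A x)) ->
  (forall x, dA x -> G (A x) = C x) -> (forall y, dD y -> H (D y) = B y) ->
  bounded_lin H -> boundedly_invertible (fun x => x - H (G x)) ->
  block_estimate dA A dD D B C.
Proof.
move=> cA0 C_bd GA HD H_bd HG_inv.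
have [K [K0 HK]] := schur_complement_bound H_bd HG_inv.
apply: (block_estimate_of_first_component K0 cA0 C_bd) => x1 x2 d1 d2.
by rewrite -GA // -HD //; exact: HK.
Qed.

Lemma ler_of_forall_small {R : realType} {a b eps : R} (k : R) : 0 < eps ->
  (forall t, 0 < t < eps -> a <= b + t * k) -> a <= b.
Proof.
move=> eps0 abt.
have b_lim : b + t * k @[t --> 0^'+] --> b.
  have : b + t * k @[t --> 0] --> b + 0 * k.
    by apply: cvgD; [exact: cvg_cst | apply: cvgMr_tmp; exact: cvg_id].
  by rewrite mul0r addr0 => /cvg_at_right_filter.
apply: (cvgr_to_ge b_lim); near=> t; apply: abt; apply/andP; split; near: t.
  exact: nbhs_right_gt.
exact: nbhs_right_lt.
Unshelve. all: by end_near. Qed.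

Lemma abs_arg_Nreal {R : realType} (t : R) : 0 < t -> abs_arg ((- t)%:C) = pi.
Proof.
move=> t0; rewrite /abs_arg normc_real normrN gtr0_norm //.
by rewrite -fmorph_div mulNr divff ?gt_eqF //; exact: acosN1.
Qed.

Lemma sectorial_resolvent {R : realType} {Y : normedModType R[i]}
    {dom : set Y} {T : Y -> Y} :
  lin_op dom T -> sectorial dom T ->
  exists M : R, 0 <= M /\ forall t : R, 0 < t -> exists Rt,
    is_bounded_inverse dom (fun x => t%:C *: x + T x) Rt /\
    forall y, t * rnorm (Rt y) <= M * rnorm y.
Proof.
move=> [dom_sub T_lin] [om [/andP[_ om_pi] resolvent_ex _ _ [M resolvent_bd]]].
exists (Num.max M 0); split => [|t t0]; first by rewrite le_max lexx orbT.
(* -t lies in the resolvent set since |arg (-t)| = pi > om, and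
   (t + T)^-1 = - (-t - T)^-1. *)
have Nt0 : (- t)%:C != 0 by rewrite (inj_eq (@complexI _)) oppr_eq0 gt_eqF.
have Nt_arg : om < abs_arg ((- t)%:C) by rewrite abs_arg_Nreal.
have [g g_inv] := resolvent_ex _ Nt0 Nt_arg.
have [[g_lin [Mg gMg]] g_dom g_right g_left] := g_inv.
exists (fun y => - g y); split.
  split.
  - split; last by exists Mg => x; rewrite normrN.
    move=> a x y _ _ /=.
    by rewrite (linear_onD g_lin) // (linear_onZ subspaceT g_lin) // opprD scalerN.
  - by move=> y; apply: subspaceN.
  - move=> y /=; rewrite (linear_onN dom_sub T_lin (g_dom y)).
    by have := g_right y; rewrite rmorphN scaleNr scalerN.
  - move=> x dx /=.
    have -> : t%:C *: x + T x = - ((- t)%:C *: x - T x).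
      by rewrite rmorphN scaleNr opprB opprK addrC.
    by rewrite (linear_onN subspaceT g_lin) // opprK g_left.
move=> y; rewrite rnormN.
have := resolvent_bd _ Nt0 Nt_arg g g_inv y.
rewrite lec_rnorm rnormZ_real normrN (gtr0_norm t0) => /le_trans; apply.
by rewrite ler_wpM2r ?rnorm_ge0 // le_max lexx.
Qed.

Section SectorialEstimate.
Context {R : realType} {X1 X2 : normedModType R[i]}.
Context {dA : set X1} {A : X1 -> X1} {dD : set X2} {D : X2 -> X2}.
Context {dB : set X2} {B : X2 -> X1} {C : X1 -> X2} {cD : R}.
Hypotheses (B_lin : lin_op dB B) (sDB : dD `<=` dB) (cD_ge0 : 0 <= cD).
Hypothesis B_bounded : forall y, dD y -> rnorm (B y) <= cD * rnorm (D y).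

Section FixedResolvents.
Context {t MD q : R} {RA : X1 -> X1} {RD : X2 -> X2}.
Hypotheses (t_gt0 : 0 < t) (q_ge0 : 0 <= q).
Hypothesis RA_inv : is_bounded_inverse dA (fun x => t%:C *: x + A x) RA.
Hypothesis RD_inv : is_bounded_inverse dD (fun y => t%:C *: y + D y) RD.
Hypothesis RD_bounded : forall y, t * rnorm (RD y) <= MD * rnorm y.
Hypothesis BRDCRA_bounded : forall x, rnorm (B (RD (C (RA x)))) <= q * rnorm x.

Let L := cD * (1 + MD).

Lemma rnorm_B_resolvent y : rnorm (B (RD y)) <= L * rnorm y.
Proof.
case: RD_inv => _ RD_dom RD_right _.
apply: (le_trans (B_bounded _ (RD_dom y))); rewrite /L -mulrA ler_wpM2l //.
have -> : D (RD y) = y - t%:C *: RD y by rewrite -{2}(RD_right y) addrC addKr.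
apply: (le_trans (ler_rnormB _ _)); rewrite rnormZ_real gtr0_norm //.
by rewrite mulrDl mul1r lerD2l.
Qed.

Lemma resolvent_decomposition {x1 x2} : dA x1 -> dD x2 ->
  A x1 = (A x1 + B x2) - B (RD (C x1 + D x2))
         + B (RD (C (RA (t%:C *: x1 + A x1)))) - t%:C *: B (RD x2).
Proof.
case: RA_inv RD_inv B_lin => _ _ _ RA_left [[RD_lin _] RD_dom _ RD_left] [dB_sub B_linear].
move=> d1 d2; have dBRD y : dB (RD y) by apply: sDB; exact: RD_dom.
have RDD : RD (D x2) = x2 - t%:C *: RD x2.
  rewrite -{2}(RD_left _ d2) (linear_onD RD_lin) // (linear_onZ subspaceT RD_lin) //.
  by rewrite addrAC subrr add0r.
have BRDq : B (RD (C x1 + D x2)) = B (RD (C x1)) + B x2 - t%:C *: B (RD x2).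
  rewrite (linear_onD RD_lin) // (linear_onD B_linear) ?dBRD // RDD.
  rewrite (linear_onB B_linear (sDB _ d2) (subspaceZ dB_sub _ (dBRD x2))).
  by rewrite (linear_onZ dB_sub B_linear _ (dBRD x2)) addrA.
rewrite RA_left // BRDq (addrC (B (RD _)) (B x2)) -(addrA (B x2)) addrKA.
by rewrite opprB addrA subrK addrK.
Qed.

Lemma resolvent_first_component_bound {x1 x2} : dA x1 -> dD x2 ->
  (1 - q) * rnorm (A x1) <= rnorm (A x1 + B x2) + L * rnorm (C x1 + D x2)
                            + t * (q * rnorm x1 + L * rnorm x2).
Proof.
move=> d1 d2.
have rnorm4 (u v w z : X1) :
    rnorm (u - v + w - z) <= rnorm u + rnorm v + rnorm w + rnorm z.
  apply: (le_trans (ler_rnormB _ _)); rewrite lerD2r.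
  apply: (le_trans (ler_rnormD _ _)); rewrite lerD2r; exact: ler_rnormB.
have := rnorm4 (A x1 + B x2) (B (RD (C x1 + D x2)))
  (B (RD (C (RA (t%:C *: x1 + A x1))))) (t%:C *: B (RD x2)).
rewrite -resolvent_decomposition // rnormZ_real gtr0_norm //.
have := rnorm_B_resolvent (C x1 + D x2); have := rnorm_B_resolvent x2.
have := BRDCRA_bounded (t%:C *: x1 + A x1).
have := ler_rnormD (t%:C *: x1) (A x1); rewrite rnormZ_real gtr0_norm // => tx1.
move=> /le_trans/(_ (ler_wpM2l q_ge0 tx1)) a_bd.
move=> /(ler_wpM2l (ltW t_gt0)) c_bd b_bd.
rewrite !mulrDr !mulrDl !mulrA in a_bd c_bd *; lra.
Qed.

End FixedResolvents.

Lemma block_estimate_of_sectorial {eps q cA : R} :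
  lin_op dA A -> sectorial dA A -> lin_op dD D -> sectorial dD D ->
  0 <= cA -> (forall x, dA x -> rnorm (C x) <= cA * rnorm (A x)) ->
  0 < eps -> q < 1 ->
  (forall t, 0 < t < eps -> forall RA RD,
     is_bounded_inverse dA (fun x => t%:C *: x + A x) RA ->
     is_bounded_inverse dD (fun y => t%:C *: y + D y) RD ->
     forall x, `|B (RD (C (RA x)))| <= q%:C * `|x|) ->
  block_estimate dA A dD D B C.
Proof.
move=> A_lin A_sec D_lin D_sec cA0 C_bd eps0 q1 small.
have [? [_ RA_ex]] := sectorial_resolvent A_lin A_sec.
have [MD [MD0 RD_ex]] := sectorial_resolvent D_lin D_sec.
pose q' := Num.max q 0; have q'0 : 0 <= q' by rewrite le_max lexx orbT.
have q'1 : 0 < 1 - q' by rewrite subr_gt0 gt_max q1 ltr01.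
pose L := cD * (1 + MD); have L0 : 0 <= L by rewrite mulr_ge0 // addr_ge0.
have K0 : 0 <= (1 + L) / (1 - q') by apply: divr_ge0; [rewrite addr_ge0 | exact: ltW].
apply: (block_estimate_of_first_component K0 cA0 C_bd) => x1 x2 d1 d2.
have : (1 - q') * rnorm (A x1) <= rnorm (A x1 + B x2) + L * rnorm (C x1 + D x2).
  apply: (ler_of_forall_small (q' * rnorm x1 + L * rnorm x2) eps0).
  move=> t /andP[t0 te]; have [RA [RA_inv _]] := RA_ex t t0.
  have [RD [RD_inv RD_bd]] := RD_ex t t0.
  apply: (resolvent_first_component_bound t0 q'0 RA_inv RD_inv RD_bd _ d1 d2) => x.
  have := small t _ RA RD RA_inv RD_inv x; rewrite t0 te lec_rnorm => /(_ isT) /le_trans.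
  by apply; rewrite ler_wpM2r ?rnorm_ge0 // le_max lexx.
move=> bound; rewrite mulrAC ler_pdivlMr // mulrC (le_trans bound) // mulrDl mul1r.
by apply: lerD; [rewrite le_max lexx | rewrite ler_wpM2l // le_max lexx orbT].
Qed.

End SectorialEstimate.

Theorem proposition4p4 (R : realType) (X1 X2 : completeNormedModType R[i])
  (dA : set X1) (A : X1 -> X1) (dD : set X2) (D : X2 -> X2)
  (dB : set X2) (B : X2 -> X1) (dC : set X1) (C : X1 -> X2) (cA cD : R) :
  lin_op dA A -> closed_op dA A -> densely_defined dA ->
  lin_op dD D -> closed_op dD D -> densely_defined dD ->
  lin_op dB B -> lin_op dC C ->
  dD `<=` dB -> dA `<=` dC ->
  0 <= cA -> 0 <= cD ->
  (forall x, dA x -> `|C x| <= cA%:C * `|A x|) ->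
  (forall y, dD y -> `|B y| <= cD%:C * `|D y|) ->
  dense_range dA A -> dense_range dD D ->
  let estimate :=
    exists c : R, forall (x1 : X1) (x2 : X2), dA x1 -> dD x2 ->
      `|((A x1, D x2) : (X1 * X2)%type)|
        <= c%:C * `|((A x1 + B x2, C x1 + D x2) : (X1 * X2)%type)| in
  [/\ (* C A^{-1} : R(A) -> X2, Ax |-> Cx, and
         B D^{-1} : R(D) -> X1, Dy |-> By, are well defined *)
      ((forall x x', dA x -> dA x' -> A x = A x' -> C x = C x') /\
       (forall y y', dD y -> dD y' -> D y = D y' -> B y = B y')),
      (* unique bounded extension G of C A^{-1} *)
      (exists G : X1 -> X2, [/\ bounded_lin G, (forall x, dA x -> G (A x) = C x) &
         forall G' : X1 -> X2, bounded_lin G' ->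
           (forall x, dA x -> G' (A x) = C x) -> G' = G]),
      (* unique bounded extension H of B D^{-1} *)
      (exists H : X2 -> X1, [/\ bounded_lin H, (forall y, dD y -> H (D y) = B y) &
         forall H' : X2 -> X1, bounded_lin H' ->
           (forall y, dD y -> H' (D y) = B y) -> H' = H]),
      (* main estimate *)
      (forall (G : X1 -> X2) (H : X2 -> X1),
         bounded_lin G -> (forall x, dA x -> G (A x) = C x) ->
         bounded_lin H -> (forall y, dD y -> H (D y) = B y) ->
         boundedly_invertible (fun x : X1 => x - H (G x)) \/
         boundedly_invertible (fun y : X2 => y - G (H y)) ->
         estimate) &
      (* sectorial case *)
      (sectorial dA A -> sectorial dD D ->
       (exists eps : R, 0 < eps /\
         ((exists q : R, q < 1 /\
            forall t : R, 0 < t < eps ->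
            forall (RA : X1 -> X1) (RD : X2 -> X2),
              is_bounded_inverse dA (fun x => t%:C *: x + A x) RA ->
              is_bounded_inverse dD (fun y => t%:C *: y + D y) RD ->
              forall x : X1, `|B (RD (C (RA x)))| <= q%:C * `|x|) \/
          (exists q : R, q < 1 /\
            forall t : R, 0 < t < eps ->
            forall (RA : X1 -> X1) (RD : X2 -> X2),
              is_bounded_inverse dA (fun x => t%:C *: x + A x) RA ->
              is_bounded_inverse dD (fun y => t%:C *: y + D y) RD ->
              forall y : X2, `|C (RA (B (RD y)))| <= q%:C * `|y|))) ->
       estimate)].
Proof.
move=> A_lin _ _ D_lin _ _ B_lin C_lin sDB sAC cA0 cD0 C_bd B_bd A_dense D_dense estimate.
have C_rbd x : dA x -> rnorm (C x) <= cA * rnorm (A x) by move/C_bd; rewrite lec_rnorm.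
have B_rbd y : dD y -> rnorm (B y) <= cD * rnorm (D y) by move/B_bd; rewrite lec_rnorm.
split.
- split; [exact: relatively_bounded_wd A_lin C_lin sAC C_rbd |
           exact: relatively_bounded_wd D_lin B_lin sDB B_rbd].
- exact: relatively_bounded_extension A_lin C_lin sAC cA0 C_rbd A_dense.
- exact: relatively_bounded_extension D_lin B_lin sDB cD0 B_rbd D_dense.
- move=> G H G_bd GA H_bd HD [HG_inv | GH_inv].
    exact: (block_estimate_of_invertible cA0 C_rbd GA HD H_bd HG_inv).
  apply: block_estimate_swap.
  exact: (block_estimate_of_invertible cD0 B_rbd HD GA G_bd GH_inv).
- move=> A_sec D_sec [eps [eps0 [[q [q1 small]] | [q [q1 small]]]]].
    exact: (block_estimate_of_sectorial B_lin sDB cD0 B_rbd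
              A_lin A_sec D_lin D_sec cA0 C_rbd eps0 q1 small).
  apply: block_estimate_swap.
  apply: (block_estimate_of_sectorial C_lin sAC cA0 C_rbd
            D_lin D_sec A_lin A_sec cD0 B_rbd eps0 q1).
  by move=> t t_eps RD RA RD_inv RA_inv; exact: (small t t_eps RA RD RA_inv RD_inv).
Qed.
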